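(* In the cone setting of the context, for each $h,g\in\mathcal C_{\mathbb C}$, \[E(h,g)=\Big\{\frac{\ell(h)}{\ell(g)}:\ell\in\hat{\mathcal C}'_{\mathbb C}\Big\}.\]
   Context: Cone setting. $V$ is a real topological vector space, $\mathcal S\subset V'$ a set of linear functionals such that $\ell(x)=0$ for all $\ell\in\mathcal S$ implies $x=0$, $C_{\mathbb R}=\{h\in V\setminus\{0\}:\ell(h)\ge0\ \forall\ell\in\mathcal S\}$, and $e\in C_{\mathbb R}$ is such that for every $h\in V$ some $\lambda\ge0$ has $\lambda e-h\in C_{\mathbb R}$. Norm $\|h\|=\inf\{\lambda\ge0:\ell(\lambda e\pm h)\ge0\ \forall\ell\in\mathcal S\}$; $\mathcal B_{\mathbb R}$ the completion of $V$; $\mathcal C_{\mathbb R}=\{h\in\mathcal B_{\mathbb R}\setminus\{0\}:\ell(h)\ge0\ \forall\ell\in\mathcal S\}$; $\mathcal C'_{\mathbb R}=\{\ell\in\mathcal B'_{\mathbb R}:\ell(h)\ge0\ \forall h\in\mathcal C_{\mathbb R}\}$; $\mathring{\mathcal C}'_{\mathbb R}=\{\ell\in\mathcal C'_{\mathbb R}:\ell(x)>0\ \forall x\in\mathcal C_{\mathbb R}\}$. $\mathcal S_*$ is the weak-$*$ closure of the convex hull of $\{\lambda\ell:\lambda>0,\ell\in\mathcal S\}$; there exist $m\in\mathcal S_*$, $\kappa\in(0,1)$ with $m(e)=1$ and $m(h)\ge\kappa\|h\|$ on $\mathcal C_{\mathbb R}$. $\mathcal B_{\mathbb C}$ is the complexification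 of $\mathcal B_{\mathbb R}$, real functionals extended complex-linearly. $\mathcal C_{\mathbb C}=\{z(x+iy):z\in\mathbb C\setminus\{0\},x,y\in\mathcal C_{\mathbb R}\}$, $\mathcal C'_{\mathbb C}=\{\ell\in\mathcal B'_{\mathbb C}:\ell(h)\ne0\ \forall h\in\mathcal C_{\mathbb C}\}$, $\hat{\mathcal C}'_{\mathbb C}=\{\pm\ell\pm ip:\ell,p\in\mathring{\mathcal C}'_{\mathbb R}\}$. For $h,g\in\mathcal C_{\mathbb C}$, $E(h,g)=\{\ell(h)/\ell(g):\ell\in\mathcal C'_{\mathbb C}\}$. *)

From HB Require Import structures.
From mathcomp Require Import all_boot all_order all_algebra.
From mathcomp Require Import all_classical all_reals all_analysis.
From mathcomp Require Import complex.
Set Implicit Arguments. Unset Strict Implicit. Unset Printing Implicit Defensive.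
Import Order.TTheory GRing.Theory Num.Theory.
Import numFieldNormedType.Exports.
Local Open Scope ring_scope.
Local Open Scope classical_set_scope.

Section ConeDefs.
Context {R : realType} {B : normedModType R}.

Definition is_rlin (f : B -> R) : Prop :=
  forall (a : R) (x y : B), f (a *: x + y) = a * f x + f y.
Definition dualR : set (B -> R) := [set f | is_rlin f /\ continuous f].

Definition coneB (S : set (B -> R)) : set B :=
  [set h | h != 0 /\ forall l, S l -> 0 <= l h].
Definition dualcone (S : set (B -> R)) : set (B -> R) :=
  [set f | dualR f /\ forall h, coneB S h -> 0 <= f h].
Definition idualcone (S : set (B -> R)) : set (B -> R) :=
  [set f | dualcone S f /\ forall x, coneB S x -> 0 < f x].

(** membership in S_* : weak-* closure (in B_R') of the convex hull of
    {lambda l : lambda > 0, l in S}, i.e. of all finite positive combinations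
    of elements of S; written out via the basic weak-* neighbourhoods. *)
Definition in_Sstar (S : set (B -> R)) (m : B -> R) : Prop :=
  dualR m /\
  forall (xs : seq B) (eps : R), 0 < eps ->
    exists (n : nat) (c : nat -> R) (ls : nat -> (B -> R)),
      (0 < n)%N /\ (forall i, (i < n)%N -> 0 < c i /\ S (ls i)) /\
      forall x, x \in xs -> `| \sum_(i < n) c i * ls i x - m x | < eps.

(** Complexification B_C = B_R + i B_R : the pair (x, y) stands for x + i y.
    A C-linear functional on B_C is determined by its restriction to B_R,
    an R-linear map B_R -> C, i.e. a pair (a, b) of real functionals
    (l(x) = a(x) + i b(x) for real x); it acts by
    l(x + i y) = l(x) + i l(y). *)
Definition BC := (B * B)%type.
Definition capp (l : (B -> R) * (B -> R)) (w : BC) : R[i] :=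
  ((l.1 w.1 +i* l.2 w.1) + 'i * (l.1 w.2 +i* l.2 w.2))%C.

Definition dualC : set ((B -> R) * (B -> R)) :=
  [set l | dualR l.1 /\ dualR l.2].

(** C_C = { z (x + i y) : z in C \ {0}, x, y in C_R } *)
Definition coneC (S : set (B -> R)) : set BC :=
  [set w | exists (z : R[i]) (x y : B),
      z != 0 /\ coneB S x /\ coneB S y /\
      w = (complex.Re z *: x - complex.Im z *: y,
           complex.Im z *: x + complex.Re z *: y)].

Definition dualconeC (S : set (B -> R)) : set ((B -> R) * (B -> R)) :=
  [set l | dualC l /\ forall h, coneC S h -> capp l h != 0].

Definition hatdualconeC (S : set (B -> R)) : set ((B -> R) * (B -> R)) :=
  [set lp | exists (l p : B -> R) (s1 s2 : R),
      idualcone S l /\ idualcone S p /\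
      (s1 = 1 \/ s1 = -1) /\ (s2 = 1 \/ s2 = -1) /\
      lp = ((fun x => s1 * l x), (fun x => s2 * p x))].

Definition Eset (S : set (B -> R)) (h g : BC) : set R[i] :=
  [set (capp l h / capp l g)%R | l in dualconeC S].

End ConeDefs.

(** V is a real topological vector space,
    B a Banach space realizing the completion of V for the order-unit norm
    via the dense isometric linear embedding iota.  The functionals of S
    are given through their (unique, continuous) extensions to B. *)
Definition cone_setting {R : realType} {V : topologicalLmodType R}
  {B : completeNormedModType R} (iota : {linear V -> B})
  (S : set (B -> R)) (e : V) (m : B -> R) (kappa : R) : Prop :=
  let coneV := [set x : V | x != 0 /\ forall l, S l -> 0 <= l (iota x)] in
  (forall l, S l -> dualR l /\ continuous (l \o iota)) /\
  (forall x : V, (forall l, S l -> l (iota x) = 0) -> x = 0) /\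
  coneV e /\
  (forall h : V, exists lam : R, 0 <= lam /\ coneV (lam *: e - h)) /\
  injective iota /\
  closure (range iota) = [set: B] /\
  (forall h : V, `| iota h | =
     inf [set lam : R | 0 <= lam /\ forall l, S l ->
            0 <= l (iota (lam *: e + h)) /\ 0 <= l (iota (lam *: e - h))]) /\
  in_Sstar S m /\ m (iota e) = 1 /\ 0 < kappa < 1 /\
  (forall h, coneB S h -> kappa * `| h | <= m h).

From HB Require Import structures.
From mathcomp Require Import all_boot all_order all_algebra.
From mathcomp Require Import all_classical all_reals all_analysis.
From mathcomp Require Import complex.
From mathcomp Require Import ring lra.
Import Order.TTheory GRing.Theory Num.Theory.
Import numFieldNormedType.Exports.
Local Open Scope ring_scope.
Local Open Scope classical_set_scope.

(* Every element of the hat cone lies in C'_C, which gives one inclusion.  For the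
   other, take l in C'_C, r = l(h)/l(g) and W = h - r g, so that l(W) = 0; it
   suffices to find l' in the hat cone with l'(W) = 0, for then l'(h)/l'(g) = r.
   Write f(W) = f(W_1) + i f(W_2) for a real functional f.  With L, P in the
   interior dual cone, L - iP kills W iff L(W) = i P(W).  Fix an interior m (here
   m >= kappa |.| on C_R) and try L = m + f, P = m + f' with f, f' in C'_R: this
   works iff (i - 1) m(W) lies in the convex cone M = {f(W) - i f'(W)}.
   Otherwise a planar separation puts M in a half-plane {Re (c z) >= 0} with
   c <> 0, so c s(W) lies in the closed first quadrant for every s in S: both
   components of cW are in C_R or zero.  Since l(cW) = 0 and l does not vanish
   on C_C, this forces cW = 0, and then every l' works. *)

Section HalfPlane.
Context {R : realType}.
Variable P : R -> R -> Prop.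
Hypothesis one_notin_cone2 : forall pa qa pb qb a b,
  P pa qa -> P pb qb -> 0 <= a -> 0 <= b ->
  a * pa + b * pb = 1 -> a * qa + b * qb = 0 -> False.

Let axis_nonpos p : P p 0 -> p <= 0.
Proof.
move=> Pp; rewrite leNgt; apply/negP => p_gt0.
apply: (one_notin_cone2 p 0 p 0 p^-1 0 Pp Pp) => //.
- by rewrite invr_ge0 ltW.
- by rewrite mulVf ?gt_eqF // mul0r addr0.
- by rewrite !mulr0 addr0.
Qed.

Let slope_le p q p' q' : P p q -> P p' q' -> 0 < q -> q' < 0 -> p / q <= p' / q'.
Proof.
move=> Pp Pp' q_gt0 q'_lt0; rewrite leNgt; apply/negP => lt_slope.
have ep : p = p / q * q by rewrite divfK // gt_eqF.
have ep' : p' = p' / q' * q' by rewrite divfK // lt_eqF.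
set K := q * p' - q' * p.
have K_gt0 : 0 < K.
  have : 0 < q * - q' * (p / q - p' / q') by rewrite !mulr_gt0 ?oppr_gt0 ?subr_gt0.
  rewrite /K {2}ep {2}ep'; lra.
apply: (one_notin_cone2 p q p' q' (- q' / K) (q / K) Pp Pp').
- by rewrite divr_ge0 ?oppr_ge0 ?ltW.
- by rewrite divr_ge0 ?ltW.
- by rewrite /K; field; rewrite -/K gt_eqF.
- by field; rewrite -/K gt_eqF.
Qed.

Lemma halfplane_of_one_notin_cone2 :
  exists k1 k2 : R, (k1 != 0 \/ k2 != 0) /\
    forall p q, P p q -> 0 <= k1 * p + k2 * q.
Proof.
have [q_le0|/existsNP[pb /existsNP[qb /not_implyP[Pb /negP]]]] :=
  pselect (forall p q, P p q -> q <= 0).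
  exists 0, (-1); split; first by right; rewrite oppr_eq0 oner_eq0.
  by move=> p q /q_le0; rewrite mul0r add0r mulN1r oppr_ge0.
rewrite -ltNge => qb_gt0.
have [q_ge0|/existsNP[pa /existsNP[qa /not_implyP[Pa /negP]]]] :=
  pselect (forall p q, P p q -> 0 <= q).
  exists 0, 1; split; first by right; rewrite oner_eq0.
  by move=> p q /q_ge0; rewrite mul0r add0r mul1r.
rewrite -ltNge => qa_lt0.
pose E := [set x | exists p q, [/\ P p q, 0 < q & x = p / q]].
have E_ub p q : P p q -> q < 0 -> ubound E (p / q).
  by move=> Ppq q_lt0 _ [p' [q' [Pp' q'_gt0 ->]]]; apply: slope_le.
have E_n0 : E !=set0 by exists (pb / qb), pb, qb.
have E_sup : has_sup E by split => //; exists (pa / qa); apply: E_ub.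
exists (-1), (sup E); split; first by left; rewrite oppr_eq0 oner_eq0.
move=> p q Ppq.
have [q_lt0|q_gt0|q0] := ltgtP q 0; last first.
- by move: Ppq; rewrite q0 mulr0 addr0 mulN1r oppr_ge0; apply: axis_nonpos.
- have le_sup : p / q <= sup E by apply: sup_upper_bound => //; exists p, q.
  have ep : p = p / q * q by rewrite divfK // gt_eqF.
  by move: le_sup; rewrite {2}ep; move: (p / q) => x; nra.
- have sup_le : sup E <= p / q := ge_sup E_n0 (E_ub p q Ppq q_lt0).
  have ep : p = p / q * q by rewrite divfK // lt_eqF.
  by move: sup_le; rewrite {2}ep; move: (p / q) => x; nra.
Qed.
End HalfPlane.

Section ConeSeparation.
Context {R : realType}.
Local Open Scope complex_scope.

Lemma cone_halfplane (M : set R[i]) (w : R[i]) :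
  (forall z1 z2, M z1 -> M z2 -> M (z1 + z2)) ->
  (forall (a : R) z, 0 <= a -> M z -> M (a%:C * z)) ->
  ~ M w -> exists2 c : R[i], c != 0 & forall z, M z -> 0 <= complex.Re (c * z).
Proof.
move=> MD MZ Mw; have [w0|w_neq0] := eqVneq w 0.
  exists 1 => [|z Mz]; first exact: oner_neq0.
  by case: Mw; rewrite w0 -(mul0r z); apply: MZ.
case: (halfplane_of_one_notin_cone2 (fun p q => M (w * (p +i* q))))
    => [|k1 [k2 [k_neq0 Hk]]].
  move=> pa qa pb qb a b Ma Mb a_ge0 b_ge0 e1 e2; apply: Mw.
  suff <- : a%:C * (w * (pa +i* qa)) + b%:C * (w * (pb +i* qb)) = w.
    by apply: MD; apply: MZ.
  rewrite -[RHS]mulr1 -[1]/(1 +i* 0) -e1 -e2; case: w {Ma Mb w_neq0} => x y; simpc.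
  by congr (_ +i* _); ring.
exists ((k1 -i* k2) / w) => [|z Mz].
  rewrite mulf_eq0 invr_eq0 (negbTE w_neq0) orbF eq_complex /= negb_and oppr_eq0.
  by case: k_neq0 => ->; rewrite ?orbT.
have -> : (k1 -i* k2) / w * z = (k1 -i* k2) * (z / w) by rewrite mulrAC mulrA.
have := Hk (complex.Re (z / w)) (complex.Im (z / w)).
have -> : w * (complex.Re (z / w) +i* complex.Im (z / w)) = z.
  by case: (z / w) (divfK w_neq0 z) => a b /= <-; rewrite mulrC.
move/(_ Mz); case: (z / w) => a b /=; simpc; lra.
Qed.
End ConeSeparation.

Section RealFunctionals.
Context {R : realType} {B : normedModType R}.
Implicit Types (f g : B -> R) (S : set (B -> R)).

Lemma rlinD f x y : is_rlin f -> f (x + y) = f x + f y.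
Proof. by move=> f_lin; rewrite -[x]scale1r f_lin mul1r scale1r. Qed.

Lemma rlin0 f : is_rlin f -> f 0 = 0.
Proof. by move=> f_lin; have := rlinD f 0 0 f_lin; rewrite addr0; lra. Qed.

Lemma rlinZ f a x : is_rlin f -> f (a *: x) = a * f x.
Proof. by move=> f_lin; rewrite -[a *: x]addr0 f_lin rlin0 // addr0. Qed.

Lemma rlinB f x y : is_rlin f -> f (x - y) = f x - f y.
Proof. by move=> f_lin; rewrite rlinD // -scaleN1r rlinZ // mulN1r. Qed.

Lemma dualRD f g : dualR f -> dualR g -> dualR (fun x => f x + g x).
Proof.
move=> [f_lin f_cont] [g_lin g_cont]; split.
  by move=> a x y; rewrite f_lin g_lin mulrDr addrACA.
by move=> x; apply: cvgD; [exact: f_cont|exact: g_cont].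
Qed.

Lemma dualRZ a f : dualR f -> dualR (fun x => a * f x).
Proof.
move=> [f_lin f_cont]; split; first by move=> b x y; rewrite f_lin mulrDr mulrCA.
by move=> x; apply: cvgM; [exact: cvg_cst|exact: f_cont].
Qed.

Lemma dualcone0 S : dualcone S (fun _ => 0).
Proof. by split=> //; split=> [a x y|x]; [rewrite mulr0 addr0|exact: cvg_cst]. Qed.

Lemma dualconeD S f g : dualcone S f -> dualcone S g -> dualcone S (fun x => f x + g x).
Proof.
move=> [f_dR f_ge0] [g_dR g_ge0]; split; first exact: dualRD.
by move=> x x_in; rewrite addr_ge0 ?f_ge0 ?g_ge0.
Qed.

Lemma dualconeZ S a f : 0 <= a -> dualcone S f -> dualcone S (fun x => a * f x).
Proof.
move=> a_ge0 [f_dR f_ge0]; split; first exact: dualRZ.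
by move=> x x_in; rewrite mulr_ge0 ?f_ge0.
Qed.

Lemma idualconeD S f g :
  idualcone S f -> dualcone S g -> idualcone S (fun x => f x + g x).
Proof.
move=> [f_dc f_gt0] g_dc; split; first exact: dualconeD.
by move=> x x_in; rewrite ltr_wpDr ?f_gt0 //; case: g_dc => _; apply.
Qed.

Lemma sub_dualcone S : (forall s, S s -> dualR s) -> S `<=` dualcone S.
Proof. by move=> S_dR s Ss; split=> [|x [_ x_ge0]]; [exact: S_dR|exact: x_ge0]. Qed.

Implicit Types (l : (B -> R) * (B -> R)) (w : @BC R B).
Local Open Scope complex_scope.

Definition cext f w : R[i] := f w.1 +i* f w.2.

Definition cmul (c : R[i]) w : @BC R B :=
  (complex.Re c *: w.1 - complex.Im c *: w.2, complex.Im c *: w.1 + complex.Re c *: w.2).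

Lemma capp_cext l w : capp l w = cext l.1 w + 'i * cext l.2 w.
Proof. by rewrite /capp /cext; simpc; congr (_ +i* _); ring. Qed.

Lemma cextD_fun f g w : cext (fun x => f x + g x) w = cext f w + cext g w.
Proof. by []. Qed.

Lemma cextZ_fun (a : R) f w : cext (fun x => a * f x) w = a%:C * cext f w.
Proof. by rewrite /cext; simpc. Qed.

Lemma cext0_fun w : cext (fun _ => 0) w = 0.
Proof. by []. Qed.

Lemma cextB f w w' : is_rlin f -> cext f (w - w') = cext f w - cext f w'.
Proof.
move=> f_lin; rewrite /cext -[(w - w').1]/(w.1 - w'.1).
by rewrite -[(w - w').2]/(w.2 - w'.2) !rlinB.
Qed.

Lemma cext_cmul f c w : is_rlin f -> cext f (cmul c w) = c * cext f w.
Proof.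
move=> f_lin; rewrite /cext /= (rlinB f) // (rlinD f) // !(rlinZ f) //.
by case: c => a b /=; simpc; congr (_ +i* _); ring.
Qed.

Lemma cappB l w w' : is_rlin l.1 -> is_rlin l.2 ->
  capp l (w - w') = capp l w - capp l w'.
Proof. by move=> l1_lin l2_lin; rewrite !capp_cext !cextB //; ring. Qed.

Lemma capp_cmul l c w : is_rlin l.1 -> is_rlin l.2 -> capp l (cmul c w) = c * capp l w.
Proof. by move=> l1_lin l2_lin; rewrite !capp_cext !cext_cmul //; ring. Qed.

Lemma capp0 l : is_rlin l.1 -> is_rlin l.2 -> capp l 0 = 0.
Proof. by move=> l1_lin l2_lin; rewrite capp_cext /cext /= !rlin0 // mulr0 addr0. Qed.

Lemma coneC_of_nonneg S w : (forall s, S s -> 0 <= s w.1 /\ 0 <= s w.2) -> w != 0 ->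
  coneC S w.
Proof.
case: w => x y /= xy_ge0 xy_neq0.
have halves (v : B) : (2^-1 : R) *: v + (2^-1 : R) *: v = v.
  by rewrite -scalerDl -[X in _ = X]scale1r; congr (_ *: _); lra.
have [x0|x_neq0] := eqVneq x 0.
  have y_neq0 : y != 0 by apply: contraNneq xy_neq0 => y0; rewrite x0 y0.
  have y_in : coneB S y by split=> // s /xy_ge0[].
  exists (2^-1 +i* 2^-1), y, y.
  by rewrite eq_complex /= invr_eq0 pnatr_eq0 x0 subrr halves.
have [y0|y_neq0] := eqVneq y 0.
  have x_in : coneB S x by split=> // s /xy_ge0[].
  exists (2^-1 -i* 2^-1), x, x.
  by rewrite eq_complex /= invr_eq0 pnatr_eq0 y0 scaleNr opprK halves addrC subrr.
have x_in : coneB S x by split=> // s /xy_ge0[].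
have y_in : coneB S y by split=> // s /xy_ge0[].
exists 1, x, y.
by rewrite oner_neq0 /= !scale1r !scale0r subr0 add0r.
Qed.

Lemma hatdualconeC_sub S : hatdualconeC S `<=` dualconeC S.
Proof.
move=> _ [L [P [s1 [s2 [[[L_dR _] L_gt0] [[[P_dR _] P_gt0] [s1E [s2E ->]]]]]]]].
have l1_dR := dualRZ s1 L L_dR; have l2_dR := dualRZ s2 P P_dR.
split=> // _ [z [x [y [z_neq0 [x_in [y_in ->]]]]]].
rewrite -[(_, _) in X in capp _ X]/(cmul z (x, y)) capp_cmul;
  [|exact: l1_dR.1|exact: l2_dR.1].
rewrite mulf_neq0 // capp_cext /cext /=; simpc; rewrite eq_complex /= negb_and.
move: (L_gt0 x x_in) (L_gt0 y y_in) (P_gt0 x x_in) (P_gt0 y y_in).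
(* s1 = s2 makes the imaginary part nonzero, s1 = - s2 the real part. *)
by case: s1E s2E => -> [] -> *; apply/orP; [right|left|left|right]; apply/eqP; lra.
Qed.

End RealFunctionals.

Section HatDualCone.
Context {R : realType} {B : normedModType R}.
Variables (S : set (B -> R)) (m : B -> R).
Hypothesis S_dualR : forall s, S s -> dualR s.
Hypothesis m_int : idualcone S m.
Local Open Scope complex_scope.

Lemma hat_kernel_of_rotation (L P : B -> R) (W : @BC R B) :
  idualcone S L -> idualcone S P -> cext L W = 'i * cext P W ->
  exists2 l, hatdualconeC S l & capp l W = 0.
Proof.
move=> L_int P_int LP.
exists (fun x => 1 * L x, fun x => -1 * P x).
  by exists L, P, 1, (-1); split; [|split; [|split; [left|split; [right|]]]].
by rewrite capp_cext !cextZ_fun LP rmorph1 rmorphN1 mul1r mulN1r mulrN subrr.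
Qed.

Lemma cmul_quadrant_kernel l (W : @BC R B) c :
  dualconeC S l -> capp l W = 0 ->
  (forall s, S s ->
     0 <= complex.Re (c * cext s W) /\ 0 <= complex.Im (c * cext s W)) ->
  cmul c W = 0.
Proof.
move=> [[[l1_lin _] [l2_lin _]] l_neq0] lW cW_quad.
apply/eqP; apply: contraT => cW_neq0.
have cW_cone : coneC S (cmul c W).
  apply: coneC_of_nonneg cW_neq0 => s Ss.
  by have := cW_quad s Ss; rewrite -cext_cmul //; case: (S_dualR s Ss).
by have := l_neq0 _ cW_cone; rewrite capp_cmul // lW mulr0 eqxx.
Qed.

Lemma dualconeC_kernel_hat l (W : @BC R B) : dualconeC S l -> capp l W = 0 ->
  exists2 l', hatdualconeC S l' & capp l' W = 0.
Proof.
move=> l_in lW.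
pose M := [set z | exists f f',
  [/\ dualcone S f, dualcone S f' & z = cext f W - 'i * cext f' W]].
have [[f [f' [f_dc f'_dc ez]]]|notM] := pselect (M (('i - 1) * cext m W)).
  apply: (@hat_kernel_of_rotation (fun x => m x + f x) (fun x => m x + f' x));
    [exact: idualconeD|exact: idualconeD|].
  move/eqP: ez; rewrite eq_sym subr_eq => /eqP ez.
  by rewrite !cextD_fun ez; ring.
have MD z1 z2 : M z1 -> M z2 -> M (z1 + z2).
  move=> [f1 [f1' [f1_dc f1'_dc ->]]] [f2 [f2' [f2_dc f2'_dc ->]]].
  exists (fun x => f1 x + f2 x), (fun x => f1' x + f2' x).
  by split; [exact: dualconeD|exact: dualconeD|rewrite !cextD_fun; ring].
have MZ (a : R) z : 0 <= a -> M z -> M (a%:C * z).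
  move=> a_ge0 [f1 [f1' [f1_dc f1'_dc ->]]].
  exists (fun x => a * f1 x), (fun x => a * f1' x).
  by split; [exact: dualconeZ|exact: dualconeZ|rewrite !cextZ_fun; ring].
have [c c_neq0 cM] := cone_halfplane _ _ MD MZ notM.
have c_quadrant s : S s ->
    0 <= complex.Re (c * cext s W) /\ 0 <= complex.Im (c * cext s W).
  move=> Ss; have s_dc := sub_dualcone _ S_dualR _ Ss; split.
    apply: cM; exists s, (fun _ => 0).
    by rewrite cext0_fun mulr0 subr0; split=> //; exact: dualcone0.
  have : M (- 'i * cext s W).
    exists (fun _ => 0), s.
    by rewrite cext0_fun sub0r mulNr; split=> //; exact: dualcone0.
  by move/cM; rewrite mulrCA; case: (c * cext s W) => a b /=; simpc; lra.
have cW0 : cmul c W = 0 by apply: cmul_quadrant_kernel l_in lW c_quadrant.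
exists (fun x => 1 * m x, fun x => 1 * m x).
  by exists m, m, 1, 1; split; [|split; [|split; [left|split; [left|]]]].
have m1_lin : is_rlin (fun x => 1 * m x) by case: (dualRZ 1 m m_int.1.1).
have : capp (fun x => 1 * m x, fun x => 1 * m x) (cmul c W) = 0 by rewrite cW0 capp0.
by rewrite capp_cmul // => /eqP; rewrite mulf_eq0 (negbTE c_neq0) => /eqP.
Qed.

Lemma Eset_hatdualconeC h g : coneC S g ->
  Eset S h g = [set (capp l h / capp l g)%R | l in hatdualconeC S].
Proof.
move=> g_in; apply/seteqP; split=> _ [l l_in <-]; last first.
  by exists l => //; apply: hatdualconeC_sub.
have [[[l1_lin _] [l2_lin _]] l_neq0] := l_in.
set r := capp l h / capp l g.
have [l' l'_hat l'W] : exists2 l', hatdualconeC S l' & capp l' (h - cmul r g) = 0.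
  apply: dualconeC_kernel_hat l_in _.
  by rewrite cappB // capp_cmul // divfK ?subrr ?l_neq0.
exists l' => //.
have [[[l'1_lin _] [l'2_lin _]] l'_neq0] : dualconeC S l' by apply: hatdualconeC_sub.
move/eqP: l'W; rewrite cappB // capp_cmul // subr_eq0 => /eqP ->.
by rewrite mulfK ?l'_neq0.
Qed.

End HatDualCone.

Theorem lemma5p9 (R : realType) (V : topologicalLmodType R)
  (B : completeNormedModType R) (iota : {linear V -> B})
  (S : set (B -> R)) (e : V) (m : B -> R) (kappa : R)
  (Hset : cone_setting iota S e m kappa)
  (h g : BC) (hC : coneC S h) (gC : coneC S g) :
  Eset S h g = [set (capp l h / capp l g)%R | l in hatdualconeC S].
Proof.
have [S_dual [_ [_ [_ [_ [_ [_ [[m_dualR _] [_ [/andP[kappa_gt0 _] m_ge]]]]]]]]]] := Hset.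
have m_gt0 x : coneB S x -> 0 < m x.
  move=> x_in; apply: lt_le_trans (m_ge x x_in).
  by rewrite mulr_gt0 // normr_gt0; case: x_in.
apply: (@Eset_hatdualconeC R B S m) gC.
- by move=> s /S_dual[].
- by split=> //; split=> // x /m_gt0/ltW.
Qed.
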